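(* For each integer $n\ge1$, let $V_n=\{a_1,\dots,a_{n+1}\}$ consist of $n+1$ pairwise different letters and $L_{9,n}=\{a_1\}^+\{a_2\}^+\cdots\{a_{n+1}\}^+$. Then $L_{9,n}\in\mathrm{SLT}_2\setminus\mathrm{RL}_n^V$.
   Context: Strictly locally testable languages: let $V$ be an alphabet and $k\ge1$. For $B,I,E\subseteq V^k$ and $F\subseteq V^{\le k-1}$, $\mathrm{slt}(B,I,E,F)$ is the language over $V$ consisting of all words in $F$ together with all words $a_1\cdots a_n$ ($a_i\in V$, $n\ge k$) with $a_1\cdots a_k\in B$, $a_{j+1}\cdots a_{j+k}\in I$ for all $1\le j\le n-k-1$, and $a_{n-k+1}\cdots a_n\in E$. $\mathrm{SLT}_k$ is the family of languages of this form. A right-linear grammar is $G=(N,T,P,S)$ with rules $A\to wB$ or $A\to w$ ($A,B\in N$, $w\in T^*$). For a regular language $L$, $\mathrm{Var}_{RL}(L)$ is the minimum of $|N|$ over all right-linear grammars generating $L$; $\mathrm{RL}_n^V=\{L\text{ regular}:\mathrm{Var}_{RL}(L)\le n\}$. *)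

From mathcomp Require Import all_boot.
Set Implicit Arguments. Unset Strict Implicit. Unset Printing Implicit Defensive.

Definition language (V : Type) := seq V -> Prop.

(* slt(B,I,E,F) for a given k, exactly as in the paper:
   all words of F, together with all words a_1..a_n, n >= k, with
   a_1..a_k in B, a_{j+1}..a_{j+k} in I for 1 <= j <= n-k-1,
   and a_{n-k+1}..a_n in E. *)
Definition slt (V : Type) (k : nat) (B I E F : language V) : language V :=
  fun w => F w \/
    (k <= size w /\ B (take k w) /\
     (forall j, 1 <= j -> j <= size w - k - 1 -> I (take k (drop j w))) /\
     E (drop (size w - k) w)).

Definition in_SLT (V : Type) (k : nat) (L : language V) : Prop :=
  exists B I E F : language V,
    (forall w, B w -> size w = k) /\
    (forall w, I w -> size w = k) /\
    (forall w, E w -> size w = k) /\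
    (forall w, F w -> size w <= k - 1) /\
    (forall w, L w <-> slt k B I E F w).

(* Right-linear grammar with m nonterminals ('I_m) over terminals V.
   A rule (A, w, Some B) is A -> wB, a rule (A, w, None) is A -> w. *)
Record rl_grammar (V : Type) (m : nat) := RLGrammar {
  rl_rules : seq ('I_m * seq V * option 'I_m);
  rl_start : 'I_m
}.

Inductive derives (V : eqType) (m : nat) (G : rl_grammar V m) : 'I_m -> seq V -> Prop :=
  | derives_term A w : (A, w, None) \in rl_rules G -> derives G A w
  | derives_step A u B w : (A, u, Some B) \in rl_rules G -> derives G B w ->
      derives G A (u ++ w).

Definition rl_lang (V : eqType) (m : nat) (G : rl_grammar V m) : language V :=
  derives G (rl_start G).

Definition in_RLV (V : eqType) (n : nat) (L : language V) : Prop :=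
  exists m (G : rl_grammar V m), m <= n /\ (forall w, rl_lang G w <-> L w).

(* L_{9,n} = {a_1}^+ ... {a_{n+1}}^+ over V_n = 'I_(n+1), letter a_{i+1} = i. *)
Definition L9 (n : nat) : language 'I_n.+1 :=
  fun w => exists c : 'I_n.+1 -> nat, (forall i, 0 < c i) /\
    w = flatten [seq nseq (c i) i | i <- enum 'I_n.+1].
Arguments L9 n : clear implicits.

(* Letters are identified with their indices 'I_n.+1.  A word belongs to L_{9,n}
   iff its index sequence starts at 0, ends at n, and each index equals its
   predecessor or exceeds it by one (L9_path).  This characterisation is proved
   through the decomposition of such "unit-step" paths of naturals into runs.

   Membership in SLT_2: a word of length >= 2 satisfies slt(B,I,E,{}) with B, I,
   E the two-letter words that are steps of a relation r (and whose first/last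
   letter satisfies P/Q) iff it is an r-path from a P-letter to a Q-letter
   (slt_pairs, valid for any alphabet); apply it to the letter step relation.

   Lower bound: take N larger than the total length of the rule right-hand sides
   of a grammar G for L_{9,n} and the word w = a_1^N ... a_{n+1}^N.  Any derivation
   of w can be cut, inside every block i, after a prefix p_i reaching a
   nonterminal B_i (derives_cut).  If B_i = B_j with i < j, splicing the prefix
   p_j with the suffix derived from B_i yields a word of L_{9,n} containing a_j
   before a_i, contradicting sortedness (L9_sorted).  So i |-> B_i is injective
   and G has at least n+1 nonterminals. *)

From mathcomp Require Import all_boot zify.
Set Implicit Arguments. Unset Strict Implicit. Unset Printing Implicit Defensive.

Definition nat_step (x y : nat) : bool := (y == x) || (y == x.+1).

Lemma nat_step_leq x y : nat_step x y -> x <= y.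
Proof. by case/orP => /eqP ->. Qed.

Lemma nat_step_path_last a s : path nat_step a s -> a <= last a s.
Proof.
elim: s a => //= y s IH a /andP[step_ay path_s].
exact: leq_trans (nat_step_leq step_ay) (IH y path_s).
Qed.

Lemma nseq_path (a m : nat) : path nat_step a (nseq m a).
Proof. by elim: m => //= m ->; rewrite /nat_step eqxx. Qed.

Lemma last_nseq_self (T : Type) (a : T) m : last a (nseq m a) = a.
Proof. by elim: m. Qed.

Lemma runs_path (a k : nat) (d : nat -> nat) : (forall i, 0 < d i) ->
  exists s, [/\ flatten [seq nseq (d i) i | i <- iota a k.+1] = a :: s,
               path nat_step a s & last a s = a + k].
Proof.
move=> d_pos; elim: k a => [|k IH] a.
  exists (nseq (d a).-1 a).
  by rewrite /= cats0 -{1}(prednK (d_pos a)) nseq_path last_nseq_self addn0.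
have [s [runs_s path_s last_s]] := IH a.+1.
exists (nseq (d a).-1 a ++ a.+1 :: s); split.
- rewrite -[iota a k.+2]/([:: a] ++ iota a.+1 k.+1) map_cat flatten_cat runs_s.
  by rewrite /= cats0 -{1}(prednK (d_pos a)).
- by rewrite cat_path nseq_path last_nseq_self /= /nat_step eqxx orbT path_s.
- by rewrite last_cat last_nseq_self /= last_s addSnnS.
Qed.

Lemma path_runs (a : nat) (s : seq nat) : path nat_step a s ->
  exists d, (forall i, 0 < d i) /\
    a :: s = flatten [seq nseq (d i) i | i <- iota a (last a s - a).+1].
Proof.
elim: s a => [|y s IH] a /=; first by exists (fun _ => 1); rewrite subnn.
case/andP => step_ay path_s; have [d [d_pos runs_s]] := IH y path_s.
have y_le_last := nat_step_path_last path_s.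
pose d' l i := if i == a then l else d i.
have d'_pos l : 0 < l -> forall i, 0 < d' l i by move=> l_pos i; rewrite /d'; case: eqP.
have d'_off l b c : a < b ->
    [seq nseq (d' l i) i | i <- iota b c] = [seq nseq (d i) i | i <- iota b c].
  move=> lt_ab; apply/eq_in_map => i; rewrite mem_iota /d' => /andP[le_bi _].
  by rewrite ifN //; lia.
case/orP: step_ay => /eqP eq_y; subst y.
  exists (d' (d a).+1); split; first exact: d'_pos.
  by rewrite /= d'_off // /d' eqxx /= runs_s.
exists (d' 1); split; first exact: d'_pos.
have -> : last a.+1 s - a = (last a.+1 s - a.+1).+1 by lia.
by rewrite d'_off // -runs_s /d' eqxx.
Qed.

Definition letter_step (n : nat) : rel 'I_n.+1 := relpre val nat_step.

Lemma map_val_runs n (c : 'I_n.+1 -> nat) (d : nat -> nat) :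
  (forall i, c i = d (val i)) ->
  map val (flatten [seq nseq (c i) i | i <- enum 'I_n.+1]) =
  flatten [seq nseq (d j) j | j <- iota 0 n.+1].
Proof.
move=> cd; rewrite map_flatten -map_comp -val_enum_ord -map_comp.
by congr flatten; apply: eq_map => i /=; rewrite map_nseq cd.
Qed.

Lemma L9_path n (w : seq 'I_n.+1) : L9 n w <->
  exists s, [/\ w = ord0 :: s, path (@letter_step n) ord0 s & last ord0 s = ord_max].
Proof.
split.
  case=> c [c_pos ->].
  have c_val i : c i = c (inord (val i)) by rewrite inord_val.
  have [t [runs_t path_t last_t]] := runs_path 0 n (fun i => c_pos (inord i)).
  move: (map_val_runs (d := fun j => c (inord j)) c_val); rewrite runs_t.
  case: (flatten _) => // x s [val_x map_s].
  exists s; split.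
  - by congr cons; apply: val_inj.
  - by rewrite -path_map map_s.
  - by apply: val_inj; rewrite -last_map map_s last_t.
case=> s [-> path_s last_s].
have path_vals : path nat_step (val (@ord0 n)) (map val s) by rewrite path_map.
have [d [d_pos runs]] := path_runs path_vals.
exists (fun i => d (val i)); split => //.
apply: (@inj_map _ _ val val_inj); rewrite (map_val_runs (d := d)) //.
by rewrite /= runs -[0]/(val (@ord0 n)) last_map last_s subn0.
Qed.

Lemma L9_sorted n (p s : seq 'I_n.+1) : L9 n (p ++ s) ->
  forall x y, x \in p -> y \in s -> x <= y.
Proof.
case/L9_path => t [w_eq path_t _].
have : sorted (relpre val leq) (p ++ s).
  rewrite w_eq /=; apply: sub_path path_t => x y; exact: nat_step_leq.
rewrite (sorted_pairwise (fun y x z => @leq_trans (val y) (val x) (val z))).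
by rewrite pairwise_cat => /and3P[/allrelP ordered _ _].
Qed.

Section PairLanguages.

Variables (V : Type) (r : rel V).

Definition pair_lang (P Q : pred V) : language V :=
  fun t => exists x y, [/\ t = [:: x; y], P x, r x y & Q y].

Lemma window_nth (x0 : V) (w : seq V) j : j.+1 < size w ->
  take 2 (drop j w) = [:: nth x0 w j; nth x0 w j.+1].
Proof.
by move=> lt_jw; rewrite (drop_nth x0) ?(ltnW lt_jw) // (drop_nth x0) //= take0.
Qed.

Lemma pair_lang_window (x0 : V) P Q (w : seq V) j : j.+1 < size w ->
  pair_lang P Q (take 2 (drop j w)) <->
  [/\ P (nth x0 w j), r (nth x0 w j) (nth x0 w j.+1) & Q (nth x0 w j.+1)].
Proof.
move=> lt_jw; rewrite (window_nth x0 lt_jw); split.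
  by case=> x [y [[-> ->]]].
by case=> *; exists (nth x0 w j), (nth x0 w j.+1).
Qed.

Lemma slt_pairs (P Q : pred V) (w : seq V) :
  slt 2 (pair_lang P predT) (pair_lang predT predT) (pair_lang predT Q)
        (fun _ => False) w <->
  exists x s, [/\ w = x :: s, 0 < size s, P x, path r x s & Q (last x s)].
Proof.
have last_window x s : 0 < size s ->
    drop (size (x :: s) - 2) (x :: s) = take 2 (drop (size s).-1 (x :: s)).
  move=> s_pos; rewrite take_oversize; last by rewrite size_drop /=; lia.
  by congr drop; rewrite /=; lia.
split.
  case=> [//|]; case: w => [[] //|x s] [size_s [first_w [inner_w last_w]]].
  have s_pos : 0 < size s by move: size_s; rewrite /=; lia.
  rewrite -[x :: s]drop0 (pair_lang_window x) /= in first_w; last by [].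
  case: first_w => Px r_first _.
  rewrite last_window // (pair_lang_window x) /= in last_w; last by lia.
  case: last_w => _ r_last; rewrite nth_last => Q_last.
  exists x, s; split => //; apply/(pathP x) => i lt_is.
  case: (posnP i) => [-> //| i_pos].
  case: (ltnP i.+1 (size s)) => [lt_i1s | le_si1].
    have inner_i : i <= size (x :: s) - 2 - 1 by rewrite /=; lia.
    by case/(pair_lang_window x): (inner_w i i_pos inner_i) => //=; lia.
  by have -> : i = (size s).-1 by lia.
case=> x [s [-> s_pos Px path_s Q_last]]; right.
have r_nth i : i < size s -> r (nth x (x :: s) i) (nth x (x :: s) i.+1).
  by move/(pathP x): path_s; apply.
split; first by rewrite /=; lia.
split.
  by rewrite -[x :: s]drop0 (pair_lang_window x) //=; split => //; exact: (r_nth 0).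
split.
  move=> j _ /= lt_j; apply/(pair_lang_window x); first by rewrite /=; lia.
  by split => //; apply: r_nth; lia.
rewrite last_window // (pair_lang_window x) /=; last by lia.
split => //; first by apply: r_nth; lia.
by rewrite nth_last.
Qed.

End PairLanguages.

Lemma L9_SLT n : 1 <= n -> in_SLT 2 (L9 n).
Proof.
move=> n_pos.
exists (pair_lang (@letter_step n) (pred1 ord0) predT), (pair_lang (@letter_step n) predT predT),
       (pair_lang (@letter_step n) predT (pred1 ord_max)), (fun _ => False).
do 3 (split; first by move=> w [x [y [-> *]]]).
split=> // w; rewrite slt_pairs L9_path; split.
  case=> s [-> path_s last_s]; exists ord0, s; split => //; last by rewrite /= last_s.
  by case: s {path_s} last_s => //= /(congr1 val) /=; lia.
by case=> x [s [-> _ /eqP -> path_s /eqP last_s]]; exists s.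
Qed.

Section RightLinearDerivations.

Variables (V : eqType) (m : nat) (G : rl_grammar V m).

Inductive reach : 'I_m -> seq V -> 'I_m -> Prop :=
  | reach_nil A : reach A [::] A
  | reach_step A u B p C : (A, u, Some B) \in rl_rules G -> reach B p C ->
      reach A (u ++ p) C.

Lemma reach_derives A p B s : reach A p B -> derives G B s -> derives G A (p ++ s).
Proof.
elim=> // A' u B' p' C rule _ IH /IH derives_p's.
by rewrite -catA; apply: derives_step rule derives_p's.
Qed.

Definition rules_weight : nat := \sum_(rule <- rl_rules G) size rule.1.2.

Lemma rule_size_le rule : rule \in rl_rules G -> size rule.1.2 <= rules_weight.
Proof. by move=> in_G; rewrite /rules_weight (big_rem _ in_G) /= leq_addr. Qed.

Lemma derives_cut A w k : derives G A w -> k + rules_weight < size w ->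
  exists B p s, [/\ reach A p B, derives G B s, w = p ++ s &
                    k < size p <= k + rules_weight].
Proof.
move=> der_w; elim: der_w k => [A' w' rule | A' u B' w' rule der_w' IH] k lt_kw.
  by have := rule_size_le rule; rewrite /=; lia.
have size_u := rule_size_le rule; rewrite /= in size_u; rewrite size_cat in lt_kw.
have [lt_ku | le_uk] := ltnP k (size u).
  exists B', u, w'; split => //; last by lia.
  by rewrite -[u]cats0; apply: reach_step rule (reach_nil _).
have lt_rest : k - size u + rules_weight < size w' by lia.
have [B [p [s [reach_p der_s -> size_p]]]] := IH _ lt_rest.
exists B, (u ++ p), s; split => //; first exact: reach_step rule reach_p.
- by rewrite catA.
- by rewrite size_cat; lia.
Qed.

End RightLinearDerivations.

Definition block_word (n N : nat) : seq 'I_n.+1 :=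
  mkseq (fun k => inord (k %/ N)) (n.+1 * N).

Lemma block_word_nth n N k : k < n.+1 * N ->
  nth ord0 (block_word n N) k = k %/ N :> nat.
Proof.
move=> lt_k; have N_pos : 0 < N by case: N lt_k; rewrite ?muln0.
by rewrite nth_mkseq // inordK // ltn_divLR.
Qed.

Lemma block_word_L9 n N : 0 < N -> L9 n (block_word n N).
Proof.
move=> N_pos; apply/L9_path.
have size_w : size (block_word n N) = n.+1 * N by rewrite size_mkseq.
case E: (block_word n N) size_w => [|x s] //= size_s; first by nia.
have nth_w k : k < n.+1 * N -> val (nth ord0 (x :: s) k) = k %/ N.
  by rewrite -E; apply: block_word_nth.
have x_0 : x = ord0.
  by apply: val_inj; rewrite /= -(div0n N); apply: (nth_w 0); rewrite -size_s.
subst x; exists s; split => //.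
- apply/(pathP ord0) => i lt_is.
  have lt_i1 : i.+1 < n.+1 * N by rewrite -size_s.
  rewrite /letter_step /= -[nth ord0 s i]/(nth ord0 (ord0 :: s) i.+1).
  rewrite !nth_w ?(ltnW lt_i1) // divnS // /nat_step.
  by case: (N %| i.+1); rewrite ?eqxx ?orbT.
- apply: val_inj; rewrite /= (last_nth ord0) nth_w; last by rewrite -size_s.
  have -> : size s = n * N + N.-1 by move: size_s; rewrite mulSn; lia.
  by rewrite divnMDl // divn_small ?addn0 // ltn_predL.
Qed.

Lemma divn_block N i k : i * N <= k < i * N + N -> k %/ N = i.
Proof.
case/andP=> lo hi; have N_pos : 0 < N by lia.
by rewrite -(subnKC lo) divnMDl // divn_small ?addn0 //; lia.
Qed.

Lemma block_end_le n (i : 'I_n.+1) N : i * N + N <= n.+1 * N.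
Proof. by rewrite addnC -mulSn leq_mul2r ltn_ord orbT. Qed.

Lemma block_word_cut n N (i : 'I_n.+1) p s : block_word n N = p ++ s ->
  i * N < size p < i * N + N -> i \in p /\ i \in s.
Proof.
move=> w_eq /andP[lo hi].
have size_ps : size p + size s = n.+1 * N by rewrite -size_cat -w_eq size_mkseq.
have le_iN := block_end_le i N.
have s_pos : 0 < size s by lia.
have nth_ps k : i * N <= k < i * N + N -> nth ord0 (p ++ s) k = i.
  move=> range; apply: val_inj; rewrite /= -w_eq block_word_nth; last by lia.
  exact: divn_block.
split.
  have <- : nth ord0 (p ++ s) (size p).-1 = i by apply: nth_ps; lia.
  have lt_last : (size p).-1 < size p by rewrite ltn_predL; lia.
  by rewrite nth_cat lt_last mem_nth.
have <- : nth ord0 (p ++ s) (size p) = i by apply: nth_ps; lia.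
by rewrite nth_cat ltnn subnn mem_nth.
Qed.

Lemma L9_not_RLV n : ~ in_RLV n (L9 n).
Proof.
case=> m [G [le_mn gen_L9]].
pose N := (rules_weight G).+1; have N_def : N = (rules_weight G).+1 by [].
clearbody N; pose w := block_word n N.
have L9_w : L9 n w by apply: block_word_L9; rewrite N_def.
have cut_state (i : 'I_n.+1) : exists B, exists p s : seq 'I_n.+1,
    [/\ reach G (rl_start G) p B, derives G B s, w = p ++ s & i * N < size p <= i * N + rules_weight G].
  apply: derives_cut; first exact/gen_L9.
  by have := block_end_le i N; rewrite size_mkseq; lia.
have [state state_cut] := fin_all_exists cut_state.
have state_ord (i j : 'I_n.+1) : state i = state j -> j <= i.
  move=> same; have [pi [si [_ der_si wi cut_i]]] := state_cut i.
  have [pj [sj [reach_pj _ wj cut_j]]] := state_cut j.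
  rewrite same in der_si.
  have L9_pjsi : L9 n (pj ++ si) by apply/gen_L9; apply: reach_derives reach_pj der_si.
  apply: (L9_sorted L9_pjsi).
  - by case: (block_word_cut (i := j) wj); first by lia.
  - by case: (block_word_cut (i := i) wi); first by lia.
have state_inj : injective state.
  by move=> i j same; apply/val_inj/eqP; rewrite eqn_leq !state_ord.
by have := leq_card state state_inj; rewrite !card_ord; lia.
Qed.

Theorem mainTheorem20 (n : nat) (Hn : 1 <= n) :
  in_SLT 2 (L9 n) /\ ~ in_RLV n (L9 n).
Proof. by split; [apply: L9_SLT | apply: L9_not_RLV]. Qed.
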